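(* Let $(\Omega,\mathcal{F})$ be a measurable space, $\mathcal{P}$ a nonempty set of probability measures on it, $\hat{\mathbb{E}}[Z]=\sup_{P\in\mathcal{P}}E_P[Z]$, and let $X,Y$ be random variables with $\hat{\mathbb{E}}[X^2]+\hat{\mathbb{E}}[Y^2]<\infty$. Let $\rho_X=\frac12(\overline{\mu}_X+\underline{\mu}_X)$, $\rho_Y=\frac12(\overline{\mu}_Y+\underline{\mu}_Y)$, $\Delta_X=\overline{\mu}_X-\underline{\mu}_X$, $\Delta_Y=\overline{\mu}_Y-\underline{\mu}_Y$. Then: (1) If $(\mu_1,\mu_2)=(\overline{\mu}_X,\overline{\mu}_Y)$ or $(\mu_1,\mu_2)=(\underline{\mu}_X,\underline{\mu}_Y)$, then $\overline{C}(X,Y)\le\hat{\mathbb{E}}[(X-\mu_1)(Y-\mu_2)]\le\overline{C}(X,Y)+\Delta_X\Delta_Y$ and $\underline{C}(X,Y)\le-\hat{\mathbb{E}}[-(X-\mu_1)(Y-\mu_2)]\le\underline{C}(X,Y)+\Delta_X\Delta_Y$. If $(\mu_1,\mu_2)=(\underline{\mu}_X,\overline{\mu}_Y)$ or $(\mu_1,\mu_2)=(\overline{\mu}_X,\underline{\mu}_Y)$, then $\overline{C}(X,Y)-\Delta_X\Delta_Y\le\hat{\mathbb{E}}[(X-\mu_1)(Y-\mu_2)]\le\overline{C}(X,Y)+\Delta_X\Delta_Y$ and $\underline{C}(X,Y)-\Delta_X\Delta_Y\le-\hat{\mathbb{E}}[-(X-\mu_1)(Y-\mu_2)]\le\underline{C}(X,Y)+\Delta_X\Delta_Y$.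 (2) Let $\overline{M}(X,Y)=\max\{\underline{\mu}_X\underline{\mu}_Y,\overline{\mu}_X\underline{\mu}_Y,\underline{\mu}_X\overline{\mu}_Y,\overline{\mu}_X\overline{\mu}_Y\}$ and $\underline{M}(X,Y)=\min\{\underline{\mu}_X\underline{\mu}_Y,\overline{\mu}_X\underline{\mu}_Y,\underline{\mu}_X\overline{\mu}_Y,\overline{\mu}_X\overline{\mu}_Y\}$. Then $\overline{C}(X,Y)+\underline{M}(X,Y)\le\hat{\mathbb{E}}[XY]\le\overline{C}(X,Y)+\overline{M}(X,Y)$ and $\underline{C}(X,Y)+\underline{M}(X,Y)\le-\hat{\mathbb{E}}[-XY]\le\underline{C}(X,Y)+\overline{M}(X,Y)$. (3) $\hat{\mathbb{E}}[(X-\rho_X)(Y-\rho_Y)]-\frac14\Delta_X\Delta_Y\le\overline{C}(X,Y)\le\hat{\mathbb{E}}[(X-\rho_X)(Y-\rho_Y)]+\frac14\Delta_X\Delta_Y$ and $-\hat{\mathbb{E}}[-(X-\rho_X)(Y-\rho_Y)]-\frac14\Delta_X\Delta_Y\le\underline{C}(X,Y)\le-\hat{\mathbb{E}}[-(X-\rho_X)(Y-\rho_Y)]+\frac14\Delta_X\Delta_Y$. (4) $0\le\overline{C}(X,Y)-\underline{C}(X,Y)\le\hat{\mathbb{E}}[(X-\rho_X)(Y-\rho_Y)]+\hat{\mathbb{E}}[-(X-\rho_X)(Y-\rho_Y)]+\frac12\Delta_X\Delta_Y$.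
   Context: For a random variable $W$ with $\hat{\mathbb{E}}[W^2]<\infty$: $\overline{\mu}_W=\hat{\mathbb{E}}[W]$, $\underline{\mu}_W=-\hat{\mathbb{E}}[-W]$, $M_W=[\underline{\mu}_W,\overline{\mu}_W]$. Upper covariance $\overline{C}(X,Y)=\max_{\mu_2\in M_Y}\min_{\mu_1\in M_X}\hat{\mathbb{E}}[(X-\mu_1)(Y-\mu_2)]$; lower covariance $\underline{C}(X,Y)=\min_{\mu_2\in M_Y}\max_{\mu_1\in M_X}\left(-\hat{\mathbb{E}}[-(X-\mu_1)(Y-\mu_2)]\right)$. *)

From HB Require Import structures.
From mathcomp Require Import all_boot all_order all_algebra.
From mathcomp Require Import all_classical all_reals all_analysis.
Set Implicit Arguments. Unset Strict Implicit. Unset Printing Implicit Defensive.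
Import Order.TTheory GRing.Theory Num.Theory.
Local Open Scope classical_set_scope.
Local Open Scope ring_scope.

Section sublinear.
Context {d : measure_display} {T : measurableType d} {R : realType}.
Variable Pset : set (probability T R).

Definition Ehat (Z : T -> R) : \bar R :=
  ereal_sup [set ('E_p[Z])%E | p in Pset].

(* upper / lower means (finite under the standing square-integrability) *)
Definition mu_up (W : T -> R) : R := fine (Ehat W).
Definition mu_lo (W : T -> R) : R := fine (- Ehat (fun w => - W w)%R)%E.

Definition Mint (W : T -> R) : set R := [set m | mu_lo W <= m <= mu_up W].

(* upper covariance: max_{m2 in M_Y} min_{m1 in M_X} Ehat[(X-m1)(Y-m2)]
   (max/min written as sup/inf; they are attained) *)
Definition ucov (X Y : T -> R) : \bar R :=
  ereal_sup [set ereal_inf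
      [set Ehat (fun w => (X w - m1) * (Y w - m2)) | m1 in Mint X]
    | m2 in Mint Y].

Definition lcov (X Y : T -> R) : \bar R :=
  ereal_inf [set ereal_sup
      [set (- Ehat (fun w => - ((X w - m1) * (Y w - m2)))%R)%E | m1 in Mint X]
    | m2 in Mint Y].

End sublinear.

From HB Require Import structures.
From mathcomp Require Import all_boot all_order all_algebra.
From mathcomp Require Import all_classical all_reals all_analysis.
From mathcomp Require Import ring lra measurable_realfun.
Set Implicit Arguments. Unset Strict Implicit. Unset Printing Implicit Defensive.
Import Order.TTheory GRing.Theory Num.Theory.
Local Open Scope classical_set_scope.
Local Open Scope ring_scope.

(* Under each P of the family, with x_P, y_P, c_P the moments E_P[X], E_P[Y],
   E_P[XY],
     E_P[(X - m1)(Y - m2)] = (c_P - x_P y_P) + (x_P - m1)(y_P - m2),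
   and square integrability bounds these moments uniformly in P.  So the
   sublinear expectations, the means and the covariances are suprema, infima,
   max-mins and min-maxes over this bounded family.  Moving the centres by at
   most s within M_X and t within M_Y changes every member by at most s t, which
   gives the bounds with D_X D_Y and, from the midpoints, D_X D_Y / 4; at a
   concordant corner the change has a sign, giving the one-sided bounds of (1).
   For (2), write E_P[XY] = (c_P - x_P y_P) + x_P y_P and recentre X at the
   point of M_X closest to 0. *)

(** * Products over a box *)

Section box_products.
Context {R : realFieldType}.
Implicit Types l u a b m s t v w : R.

Definition corner_max l1 u1 l2 u2 :=
  Num.max (Num.max (l1 * l2) (u1 * l2)) (Num.max (l1 * u2) (u1 * u2)).
Definition corner_min l1 u1 l2 u2 :=
  Num.min (Num.min (l1 * l2) (u1 * l2)) (Num.min (l1 * u2) (u1 * u2)).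

Lemma mul_itv_le_max l u a b : l <= a <= u -> a * b <= Num.max (l * b) (u * b).
Proof.
move=> /andP[la au]; rewrite le_max; apply/orP.
by have [b0|b0] := leP 0 b; [right|left]; nra.
Qed.

Lemma mul_itv_ge_min l u a b : l <= a <= u -> Num.min (l * b) (u * b) <= a * b.
Proof.
move=> /andP[la au]; rewrite ge_min; apply/orP.
by have [b0|b0] := leP 0 b; [left|right]; nra.
Qed.

Lemma le_corner_max l1 u1 l2 u2 a b : l1 <= a <= u1 -> l2 <= b <= u2 ->
  a * b <= corner_max l1 u1 l2 u2.
Proof.
move=> a_itv b_itv; rewrite (le_trans (_ : _ <= Num.max (a * l2) (a * u2))) //.
  by rewrite ![a * _]mulrC mul_itv_le_max.
by apply: le_max2; exact: mul_itv_le_max.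
Qed.

Lemma ge_corner_min l1 u1 l2 u2 a b : l1 <= a <= u1 -> l2 <= b <= u2 ->
  corner_min l1 u1 l2 u2 <= a * b.
Proof.
move=> a_itv b_itv; rewrite (le_trans _ (_ : Num.min (a * l2) (a * u2) <= _)) //.
  by apply: le_min2; exact: mul_itv_ge_min.
by rewrite ![a * _]mulrC mul_itv_ge_min.
Qed.

(* The witness is the point of [l1, u1] closest to 0. *)
Lemma recentred_product_corner_bounds l1 u1 l2 u2 m2 :
  l1 <= u1 -> l2 <= m2 <= u2 ->
  exists2 m1, l1 <= m1 <= u1 & forall a b, l1 <= a <= u1 -> l2 <= b <= u2 ->
    corner_min l1 u1 l2 u2 <= a * b - (a - m1) * (b - m2) <= corner_max l1 u1 l2 u2.
Proof.
move=> le_lu1 /andP[lm2 m2u].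
suff [m1 m1_itv between] : exists2 m1, l1 <= m1 <= u1 & forall a b,
    l1 <= a <= u1 -> l2 <= b <= u2 ->
    Num.min (a * l2) (a * u2) <= a * b - (a - m1) * (b - m2) <= Num.max (a * l2) (a * u2).
  exists m1 => // a b a_itv b_itv; have /andP[lo hi] := between a b a_itv b_itv.
  have l2_itv : l2 <= l2 <= u2 by rewrite lexx (le_trans lm2).
  have u2_itv : l2 <= u2 <= u2 by rewrite lexx (le_trans lm2).
  apply/andP; split.
    by rewrite (le_trans _ lo) // le_min !ge_corner_min.
  by rewrite (le_trans hi) // ge_max !le_corner_max.
have [l1_gt0|l1_le0] := ltP 0 l1.
  exists l1; first by rewrite lexx le_lu1.
  move=> a b /andP[la au] /andP[lb bu]; rewrite ge_min le_max.
  by apply/andP; split; [apply/orP; left|apply/orP; right]; nra.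
have [u1_lt0|u1_ge0] := ltP u1 0.
  exists u1; first by rewrite lexx le_lu1.
  move=> a b /andP[la au] /andP[lb bu]; rewrite ge_min le_max.
  by apply/andP; split; [apply/orP; right|apply/orP; left]; nra.
exists 0; first by rewrite l1_le0 u1_ge0.
move=> a b _ _; rewrite !subr0 (_ : a * b - a * (b - m2) = a * m2); last by ring.
by rewrite ![a * _]mulrC mul_itv_ge_min ?mul_itv_le_max ?lm2.
Qed.

Lemma itv_dist_le l u a m : l <= a <= u -> l <= m <= u -> `|m - a| <= u - l.
Proof. by move=> /andP[la au] /andP[lm mu]; rewrite ler_norml; apply/andP; split; lra. Qed.

Lemma itv_dist_mid_le l u m : l <= m <= u -> `|m - (u + l) / 2| <= (u - l) / 2.
Proof. by move=> /andP[lm mu]; rewrite ler_norml; apply/andP; split; lra. Qed.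

Lemma mid_in_itv l u : l <= u -> l <= (u + l) / 2 <= u.
Proof. by move=> lu; apply/andP; split; lra. Qed.

Lemma le_mul_of_norm_le v w s t : `|v| <= s -> `|w| <= t -> v * w <= s * t.
Proof. by move=> vs wt; rewrite (le_trans (ler_norm _)) // normrM ler_pM. Qed.

Lemma ler_norm_1Dsqr v : `|v| <= 1 + v ^+ 2.
Proof. by rewrite ler_norml; apply/andP; split; nra. Qed.

Lemma ler_normM_sqrD v w : `|v * w| <= v ^+ 2 + w ^+ 2.
Proof. by rewrite ler_norml; apply/andP; split; nra. Qed.

End box_products.

(** * Envelopes of a bounded family *)

Section ereal_minimax.
Context {R : realType} {A B : Type} (SA : set A) (SB : set B) (f : A -> B -> \bar R).
Local Open Scope ereal_scope.

Lemma ereal_sup_inf_le z :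
  (forall b, SB b -> exists2 a, SA a & f a b <= z) ->
  ereal_sup [set ereal_inf [set f a b | a in SA] | b in SB] <= z.
Proof.
move=> h; apply: ge_ereal_sup => _ [b SBb <-].
by have [a SAa fz] := h b SBb; apply: ge_ereal_inf; exists (f a b) => //; exists a.
Qed.

Lemma le_ereal_sup_inf z b : SB b -> (forall a, SA a -> z <= f a b) ->
  z <= ereal_sup [set ereal_inf [set f a b | a in SA] | b in SB].
Proof.
move=> SBb h; apply: le_ereal_sup_tmp; exists (ereal_inf [set f a b | a in SA]).
  by exists b.
by apply: le_ereal_inf_tmp => _ [a SAa <-]; exact: h.
Qed.

Lemma le_ereal_inf_sup z :
  (forall b, SB b -> exists2 a, SA a & z <= f a b) ->
  z <= ereal_inf [set ereal_sup [set f a b | a in SA] | b in SB].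
Proof.
move=> h; apply: le_ereal_inf_tmp => _ [b SBb <-].
by have [a SAa zf] := h b SBb; apply: le_ereal_sup_tmp; exists (f a b) => //; exists a.
Qed.

Lemma ereal_inf_sup_le z b : SB b -> (forall a, SA a -> f a b <= z) ->
  ereal_inf [set ereal_sup [set f a b | a in SA] | b in SB] <= z.
Proof.
move=> SBb h; apply: ge_ereal_inf; exists (ereal_sup [set f a b | a in SA]).
  by exists b.
by apply: ge_ereal_sup => _ [a SAa <-]; exact: h.
Qed.

End ereal_minimax.

Lemma fin_num_between {R : realType} (C : \bar R) (a b : R) :
  (a%:E <= C <= b%:E)%E -> C \is a fin_num.
Proof.
move=> /andP[aC Cb].
by rewrite fin_numElt (lt_le_trans (ltNyr a)) ?(le_lt_trans Cb (ltry b)).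
Qed.

Section bounded_images.
Context {R : realType} {I : Type} (S : set I).
Implicit Types f g : I -> R.

Definition bounded_on f := exists K, forall p, S p -> `|f p| <= K.

Lemma bounded_on_has_ubound f : bounded_on f -> has_ubound [set f p | p in S].
Proof.
by case=> K fK; exists K => _ [p Sp <-]; rewrite (le_trans (ler_norm _)) ?fK.
Qed.

Lemma bounded_on_has_lbound f : bounded_on f -> has_lbound [set f p | p in S].
Proof.
case=> K fK; exists (- K) => _ [p Sp <-].
by move: (fK p Sp); rewrite ler_norml => /andP[].
Qed.

Lemma sup_image_ge f p : bounded_on f -> S p -> f p <= sup [set f q | q in S].
Proof. by move=> /bounded_on_has_ubound fS Sp; apply: ub_le_sup => //; exists p. Qed.

Lemma inf_image_le f p : bounded_on f -> S p -> inf [set f q | q in S] <= f p.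
Proof. by move=> /bounded_on_has_lbound fS Sp; apply: ge_inf => //; exists p. Qed.

Lemma inf_le_image_le_sup f p : bounded_on f -> S p ->
  inf [set f q | q in S] <= f p <= sup [set f q | q in S].
Proof. by move=> bf Sp; rewrite inf_image_le ?sup_image_ge. Qed.

Hypothesis S0 : S !=set0.

Lemma inf_le_sup_image f : bounded_on f ->
  inf [set f p | p in S] <= sup [set f p | p in S].
Proof. by move=> bf; case: S0 => p /(inf_le_image_le_sup bf) /andP[/le_trans]; apply. Qed.

Lemma sup_image_le f z : (forall p, S p -> f p <= z) -> sup [set f p | p in S] <= z.
Proof.
move=> fz; apply: ge_sup => [|_ [p Sp <-]]; last exact: fz.
by case: S0 => p Sp; exists (f p), p.
Qed.

Lemma inf_image_ge f z : (forall p, S p -> z <= f p) -> z <= inf [set f p | p in S].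
Proof.
move=> zf; apply: lb_le_inf => [|_ [p Sp <-]]; last exact: zf.
by case: S0 => p Sp; exists (f p), p.
Qed.

Lemma sup_image_leD f g B : bounded_on f -> (forall p, S p -> g p <= f p + B) ->
  sup [set g p | p in S] <= sup [set f p | p in S] + B.
Proof.
move=> bf gf; apply: sup_image_le => p Sp.
by rewrite (le_trans (gf p Sp)) // lerD2r sup_image_ge.
Qed.

Lemma inf_image_leD f g B : bounded_on g -> (forall p, S p -> g p <= f p + B) ->
  inf [set g p | p in S] <= inf [set f p | p in S] + B.
Proof.
move=> bg gf; rewrite -lerBlDr; apply: inf_image_ge => p Sp.
by rewrite lerBlDr (le_trans (inf_image_le bg Sp)) ?gf.
Qed.

Lemma ereal_sup_image_EFin f : bounded_on f ->
  ereal_sup [set (f p)%:E | p in S] = (sup [set f p | p in S])%:E.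
Proof.
move=> bf; rewrite -(image_comp f EFin) ereal_sup_EFin //.
  exact: bounded_on_has_ubound.
by case: S0 => p Sp; exists (f p), p.
Qed.

Lemma ereal_sup_image_EFinN f : bounded_on f ->
  ereal_sup [set (- f p)%:E | p in S] = (- inf [set f p | p in S])%:E.
Proof.
move=> [K fK]; rewrite ereal_sup_image_EFin; last by exists K => p Sp; rewrite normrN fK.
by rewrite /inf opprK -(image_comp f -%R).
Qed.

End bounded_images.

Section moment_envelopes.
Context {R : realType} {I : Type} (S : set I) (x y c : I -> R).

(* With x p, y p, c p the moments E_p[X], E_p[Y], E_p[XY], [cmom p m1 m2] is
   E_p[(X - m1)(Y - m2)]. *)
Definition cmom p m1 m2 := c p - m1 * y p - m2 * x p + m1 * m2.
Definition cmom_sup m1 m2 := sup [set cmom p m1 m2 | p in S].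
Definition cmom_inf m1 m2 := inf [set cmom p m1 m2 | p in S].

Local Notation lX := (inf [set x p | p in S]).
Local Notation uX := (sup [set x p | p in S]).
Local Notation lY := (inf [set y p | p in S]).
Local Notation uY := (sup [set y p | p in S]).
Local Notation MX := [set m | lX <= m <= uX].
Local Notation MY := [set m | lY <= m <= uY].

Definition ucov_env := ereal_sup
  [set ereal_inf [set (cmom_sup m1 m2)%:E | m1 in MX] | m2 in MY].
Definition lcov_env := ereal_inf
  [set ereal_sup [set (cmom_inf m1 m2)%:E | m1 in MX] | m2 in MY].

Local Notation F := cmom_sup.
Local Notation G := cmom_inf.
Local Notation Cu := ucov_env.
Local Notation Cl := lcov_env.

Lemma cmomE p m1 m2 : cmom p m1 m2 = c p - x p * y p + (x p - m1) * (y p - m2).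
Proof. by rewrite /cmom; ring. Qed.

Lemma cmom_shiftl p m1 m1' m2 :
  cmom p m1' m2 = cmom p m1 m2 + (m1 - m1') * (y p - m2).
Proof. by rewrite !cmomE; ring. Qed.

Lemma cmom_shiftr p m1 m2 m2' :
  cmom p m1 m2' = cmom p m1 m2 + (m2 - m2') * (x p - m1).
Proof. by rewrite !cmomE; ring. Qed.

Lemma cmom_mean p m1 : cmom p m1 (y p) = c p - x p * y p.
Proof. by rewrite cmomE subrr mulr0 addr0. Qed.

Hypothesis S0 : S !=set0.
Hypotheses (x_bnd : bounded_on S x) (y_bnd : bounded_on S y) (c_bnd : bounded_on S c).

Lemma cmom_bounded m1 m2 : bounded_on S (fun p => cmom p m1 m2).
Proof.
case: x_bnd => Kx hx; case: y_bnd => Ky hy; case: c_bnd => Kc hc.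
exists (Kc + `|m1| * Ky + `|m2| * Kx + `|m1 * m2|) => p Sp; rewrite /cmom.
apply: le_trans (ler_normD _ _) _; rewrite lerD2r.
apply: le_trans (ler_normB _ _) _; apply: lerD; last by rewrite normrM ler_wpM2l ?hx.
apply: le_trans (ler_normB _ _) _; apply: lerD; first exact: hc.
by rewrite normrM ler_wpM2l ?hy.
Qed.

Let mean_in_itvX p : S p -> MX (x p). Proof. exact: inf_le_image_le_sup. Qed.
Let mean_in_itvY p : S p -> MY (y p). Proof. exact: inf_le_image_le_sup. Qed.
Let le_lXuX : lX <= uX. Proof. exact: inf_le_sup_image. Qed.
Let le_lYuY : lY <= uY. Proof. exact: inf_le_sup_image. Qed.

Lemma cmom_sup_ge p m1 m2 : S p -> cmom p m1 m2 <= F m1 m2.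
Proof. exact: sup_image_ge (cmom_bounded _ _). Qed.

Lemma cmom_inf_le p m1 m2 : S p -> G m1 m2 <= cmom p m1 m2.
Proof. exact: inf_image_le (cmom_bounded _ _). Qed.

Lemma cmom_sup_shiftl a m1 b B : (forall p, S p -> (m1 - a) * (y p - b) <= B) ->
  F a b <= F m1 b + B.
Proof.
move=> hB; apply: (sup_image_leD S0 (cmom_bounded _ _)) => p Sp.
by rewrite (cmom_shiftl p m1) lerD2l hB.
Qed.

Lemma cmom_sup_shiftr a b m2 B : (forall p, S p -> (m2 - b) * (x p - a) <= B) ->
  F a b <= F a m2 + B.
Proof.
move=> hB; apply: (sup_image_leD S0 (cmom_bounded _ _)) => p Sp.
by rewrite (cmom_shiftr p a m2) lerD2l hB.
Qed.

Lemma cmom_inf_shiftl a m1 b B : (forall p, S p -> (m1 - a) * (y p - b) <= B) ->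
  G a b <= G m1 b + B.
Proof.
move=> hB; apply: (inf_image_leD S0 (cmom_bounded _ _)) => p Sp.
by rewrite (cmom_shiftl p m1) lerD2l hB.
Qed.

Lemma cmom_inf_shiftr a b m2 B : (forall p, S p -> (m2 - b) * (x p - a) <= B) ->
  G a b <= G a m2 + B.
Proof.
move=> hB; apply: (inf_image_leD S0 (cmom_bounded _ _)) => p Sp.
by rewrite (cmom_shiftr p a m2) lerD2l hB.
Qed.

Local Open Scope ereal_scope.

Lemma ucov_env_near a b s t : MX a -> MY b ->
  (forall m, MX m -> `|m - a| <= s)%R -> (forall m, MY m -> `|m - b| <= t)%R ->
  (F a b - s * t)%:E <= Cu <= (F a b + s * t)%:E.
Proof.
move=> aX bY sX tY; apply/andP; split.
  apply: (le_ereal_sup_inf bY) => m1 m1X; rewrite lee_fin lerBlDr.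
  apply: cmom_sup_shiftl => p Sp.
  by apply: le_mul_of_norm_le; [exact: sX | exact/tY/mean_in_itvY].
apply: ereal_sup_inf_le => m2 m2Y; exists a => //; rewrite lee_fin.
apply: cmom_sup_shiftr => p Sp; rewrite mulrC.
by apply: le_mul_of_norm_le; [exact/sX/mean_in_itvX | rewrite distrC; exact: tY].
Qed.

Lemma lcov_env_near a b s t : MX a -> MY b ->
  (forall m, MX m -> `|m - a| <= s)%R -> (forall m, MY m -> `|m - b| <= t)%R ->
  (G a b - s * t)%:E <= Cl <= (G a b + s * t)%:E.
Proof.
move=> aX bY sX tY; apply/andP; split.
  apply: le_ereal_inf_sup => m2 m2Y; exists a => //; rewrite lee_fin lerBlDr.
  apply: cmom_inf_shiftr => p Sp; rewrite mulrC.
  by apply: le_mul_of_norm_le; [exact/sX/mean_in_itvX | exact: tY].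
apply: (ereal_inf_sup_le bY) => m1 m1X; rewrite lee_fin.
apply: cmom_inf_shiftl => p Sp.
by apply: le_mul_of_norm_le; [rewrite distrC; exact: sX | exact/tY/mean_in_itvY].
Qed.

Lemma ucov_env_le_concordant a b : (a, b) = (uX, uY) \/ (a, b) = (lX, lY) ->
  Cu <= (F a b)%:E.
Proof.
move=> ab; apply: ereal_sup_inf_le => m2 /andP[lm2 m2u]; exists a.
  by case: ab => -[-> _]; rewrite /= lexx le_lXuX.
rewrite lee_fin -[F a b]addr0; apply: cmom_sup_shiftr => p /mean_in_itvX/andP[lx xu].
by case: ab => -[-> ->]; nra.
Qed.

Lemma lcov_env_le_concordant a b : (a, b) = (uX, uY) \/ (a, b) = (lX, lY) ->
  Cl <= (G a b)%:E.
Proof.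
move=> ab; have bY : MY b by case: ab => -[_ ->]; rewrite /= lexx le_lYuY.
apply: (ereal_inf_sup_le bY) => m1 /andP[lm1 m1u].
rewrite lee_fin -[G a b]addr0; apply: cmom_inf_shiftl => p /mean_in_itvY/andP[ly yu].
by case: ab => -[-> ->]; nra.
Qed.

Lemma cov_le_ucov_env p : S p -> (c p - x p * y p)%:E <= Cu.
Proof.
move=> Sp; apply: (le_ereal_sup_inf (mean_in_itvY Sp)) => m1 _.
by rewrite lee_fin -(cmom_mean p m1) cmom_sup_ge.
Qed.

Lemma lcov_env_le_cov p : S p -> Cl <= (c p - x p * y p)%:E.
Proof.
move=> Sp; apply: (ereal_inf_sup_le (mean_in_itvY Sp)) => m1 _.
by rewrite lee_fin -(cmom_mean p m1) cmom_inf_le.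
Qed.

Lemma ucov_env_fin_num : Cu \is a fin_num.
Proof.
have [p Sp] := S0; apply: fin_num_between; apply/andP; split.
  exact: cov_le_ucov_env Sp.
by apply: ucov_env_le_concordant; left.
Qed.

Lemma lcov_env_fin_num : Cl \is a fin_num.
Proof.
have [p Sp] := S0; have uX_X : MX uX by rewrite /= lexx le_lXuX.
have uY_Y : MY uY by rewrite /= lexx le_lYuY.
have /andP[lo _] := lcov_env_near uX_X uY_Y (fun _ => itv_dist_le uX_X)
                                            (fun _ => itv_dist_le uY_Y).
apply: fin_num_between; apply/andP; split; first exact: lo.
exact: lcov_env_le_cov Sp.
Qed.

Local Notation D := ((uX - lX) * (uY - lY))%R.
Local Notation rX := ((uX + lX) / 2)%R.
Local Notation rY := ((uY + lY) / 2)%R.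
Local Notation Mu := (corner_max lX uX lY uY).
Local Notation Ml := (corner_min lX uX lY uY).

Lemma cov_env_box a b : MX a -> MY b ->
  Cu - D%:E <= (F a b)%:E <= Cu + D%:E /\ Cl - D%:E <= (G a b)%:E <= Cl + D%:E.
Proof.
move=> aX bY; have dX m : MX m -> (`|m - a| <= uX - lX)%R by exact: itv_dist_le.
have dY m : MY m -> (`|m - b| <= uY - lY)%R by exact: itv_dist_le.
have /andP[Fl Fu] := ucov_env_near aX bY dX dY.
have /andP[Gl Gu] := lcov_env_near aX bY dX dY.
rewrite -(fineK ucov_env_fin_num) in Fl Fu *.
rewrite -(fineK lcov_env_fin_num) in Gl Gu *.
rewrite !lee_fin in Fl Fu Gl Gu; rewrite -!EFinB -!EFinD !lee_fin.
by split; apply/andP; split; lra.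
Qed.

Lemma cov_env_concordant a b : (a, b) = (uX, uY) \/ (a, b) = (lX, lY) ->
  Cu <= (F a b)%:E <= Cu + D%:E /\ Cl <= (G a b)%:E <= Cl + D%:E.
Proof.
move=> ab; have [aX bY] : MX a /\ MY b.
  by case: ab => -[-> ->]; rewrite /= !lexx le_lXuX le_lYuY.
have [/andP[_ Fu] /andP[_ Gu]] := cov_env_box aX bY.
by rewrite ucov_env_le_concordant // lcov_env_le_concordant // Fu Gu.
Qed.

Lemma cov_env_midpoint :
  (F rX rY)%:E - (D / 4)%:E <= Cu <= (F rX rY)%:E + (D / 4)%:E /\
  (G rX rY)%:E - (D / 4)%:E <= Cl <= (G rX rY)%:E + (D / 4)%:E.
Proof.
have dX m : MX m -> (`|m - rX| <= (uX - lX) / 2)%R by exact: itv_dist_mid_le.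
have dY m : MY m -> (`|m - rY| <= (uY - lY) / 2)%R by exact: itv_dist_mid_le.
have := ucov_env_near (mid_in_itv le_lXuX) (mid_in_itv le_lYuY) dX dY.
have := lcov_env_near (mid_in_itv le_lXuX) (mid_in_itv le_lYuY) dX dY.
have -> : ((uX - lX) / 2 * ((uY - lY) / 2) = D / 4)%R by field.
by rewrite -!EFinB -!EFinD; split.
Qed.

Lemma cov_env_gap : 0 <= Cu - Cl <= (F rX rY)%:E + (- G rX rY)%:E + (D / 2)%:E.
Proof.
have [p Sp] := S0; have [/andP[_ Fu] /andP[Gl _]] := cov_env_midpoint.
have covU := cov_le_ucov_env Sp; have covL := lcov_env_le_cov Sp.
rewrite -(fineK ucov_env_fin_num) in Fu covU *.
rewrite -(fineK lcov_env_fin_num) in Gl covL *.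
rewrite -!EFinB -!EFinD !lee_fin in Fu covU Gl covL *.
by apply/andP; split; lra.
Qed.

Lemma ucov_env_product : Cu + Ml%:E <= (F 0 0)%:E <= Cu + Mu%:E.
Proof.
rewrite -(fineK ucov_env_fin_num) -!EFinD !lee_fin; apply/andP; split.
  rewrite -lerBrDr -lee_fin fineK ?ucov_env_fin_num //.
  apply: ereal_sup_inf_le => m2 m2Y.
  have [m1 m1X recentred] := recentred_product_corner_bounds le_lXuX m2Y.
  exists m1 => //; rewrite lee_fin; apply: (sup_image_le S0) => p Sp.
  have /andP[+ _] := recentred _ _ (mean_in_itvX Sp) (mean_in_itvY Sp).
  by have := cmom_sup_ge 0 0 Sp; rewrite !cmomE; lra.
apply: (sup_image_le S0) => p Sp; rewrite cmomE !subr0.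
have := cov_le_ucov_env Sp; rewrite -(fineK ucov_env_fin_num) lee_fin.
by have := le_corner_max (mean_in_itvX Sp) (mean_in_itvY Sp); lra.
Qed.

Lemma lcov_env_product : Cl + Ml%:E <= (G 0 0)%:E <= Cl + Mu%:E.
Proof.
rewrite -(fineK lcov_env_fin_num) -!EFinD !lee_fin; apply/andP; split.
  apply: (inf_image_ge S0) => p Sp; rewrite cmomE !subr0.
  have := lcov_env_le_cov Sp; rewrite -(fineK lcov_env_fin_num) lee_fin.
  by have := ge_corner_min (mean_in_itvX Sp) (mean_in_itvY Sp); lra.
rewrite -lerBlDr -lee_fin fineK ?lcov_env_fin_num //.
apply: le_ereal_inf_sup => m2 m2Y.
have [m1 m1X recentred] := recentred_product_corner_bounds le_lXuX m2Y.
exists m1 => //; rewrite lee_fin; apply: (inf_image_ge S0) => p Sp.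
have /andP[_ +] := recentred _ _ (mean_in_itvX Sp) (mean_in_itvY Sp).
by have := cmom_inf_le 0 0 Sp; rewrite !cmomE; lra.
Qed.

End moment_envelopes.

(** * Moments of square-integrable variables *)

Section expectation_moments.
Context d (T : measurableType d) (R : realType) (P : probability T R).
Local Open Scope ereal_scope.

Lemma expectation_fineE (Z : T -> R) : Z \in Lfun P 1 -> 'E_P[Z] = (fine 'E_P[Z])%:E.
Proof. by move=> Z1; rewrite fineK // expectation_fin_num. Qed.

Lemma expectationN (Z : T -> R) : Z \in Lfun P 1 ->
  'E_P[(fun w => - Z w)%R] = - 'E_P[Z].
Proof.
move=> Z1; rewrite -mulN1e -EFinN -expectationZl //; congr expectation.
by apply/funext => w; rewrite /= mulrN1.
Qed.

Lemma fine_expectationD (f g : T -> R) : f \in Lfun P 1 -> g \in Lfun P 1 ->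
  fine 'E_P[f \+ g] = (fine 'E_P[f] + fine 'E_P[g])%R.
Proof. by move=> f1 g1; rewrite expectationD // fineD // expectation_fin_num. Qed.

Lemma Lfun1_dominated (f g : T -> R) : measurable_fun setT f -> g \in Lfun P 1 ->
  (forall w, `|f w| <= g w)%R -> f \in Lfun P 1.
Proof.
move=> mf /Lfun1_integrable g1 fg; apply/Lfun1_integrable.
apply: (le_integrable measurableT _ _ g1); first exact/measurable_EFinP.
by move=> w _ /=; rewrite lee_fin (le_trans (fg w)) ?ler_norm.
Qed.

Lemma abs_fine_expectation_le (f g : T -> R) : f \in Lfun P 1 -> g \in Lfun P 1 ->
  (forall w, `|f w| <= g w)%R -> (`|fine 'E_P[f]| <= fine 'E_P[g])%R.
Proof.
move=> f1 g1 fg.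
have gBf : 0 <= 'E_P[g \- f].
  by apply: expectation_ge0 => w /=; have := fg w; rewrite ler_norml => /andP[]; lra.
have gDf : 0 <= 'E_P[g \+ f].
  by apply: expectation_ge0 => w /=; have := fg w; rewrite ler_norml => /andP[]; lra.
rewrite expectationB // in gBf; rewrite expectationD // in gDf.
rewrite (expectation_fineE f1) (expectation_fineE g1) -EFinB -EFinD !lee_fin in gBf gDf.
by rewrite ler_norml; apply/andP; split; lra.
Qed.

Section square_integrable.
Variable Z : T -> R.
Hypotheses (mZ : measurable_fun setT Z) (Z2 : 'E_P[(fun w => Z w ^+ 2)%R] < +oo).

Lemma Lfun1_sqr : (fun w => Z w ^+ 2)%R \in Lfun P 1.
Proof.
apply/Lfun1_integrable/integrableP; split.
  by apply/measurable_EFinP; exact: measurable_funX.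
under eq_integral => w _ do rewrite /= ger0_norm ?sqr_ge0 //.
by move: Z2; rewrite unlock.
Qed.

Lemma Lfun1_1Dsqr : (cst 1 \+ (fun w => Z w ^+ 2))%R \in Lfun P 1.
Proof. by rewrite rpredD ?Lfun_cst ?Lfun1_sqr. Qed.

Lemma Lfun1_of_sqr : Z \in Lfun P 1.
Proof. by apply: (Lfun1_dominated mZ Lfun1_1Dsqr) => w; exact: ler_norm_1Dsqr. Qed.

Lemma abs_fine_expectation_le_1Dsqr :
  (`|fine 'E_P[Z]| <= 1 + fine 'E_P[(fun w => Z w ^+ 2)%R])%R.
Proof.
have -> : (1 + fine 'E_P[(fun w => Z w ^+ 2)%R] = fine 'E_P[cst 1 \+ (fun w => Z w ^+ 2)])%R.
  by rewrite fine_expectationD ?Lfun_cst ?Lfun1_sqr // expectation_cst.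
by apply: abs_fine_expectation_le Lfun1_of_sqr Lfun1_1Dsqr _ => w; exact: ler_norm_1Dsqr.
Qed.

End square_integrable.

Variables (X Y : T -> R).
Hypotheses (mX : measurable_fun setT X) (mY : measurable_fun setT Y).
Hypotheses (X2 : 'E_P[(fun w => X w ^+ 2)%R] < +oo)
           (Y2 : 'E_P[(fun w => Y w ^+ 2)%R] < +oo).

Let sqrD_Lfun1 : ((fun w => X w ^+ 2) \+ (fun w => Y w ^+ 2))%R \in Lfun P 1.
Proof. by rewrite rpredD ?Lfun1_sqr. Qed.

Lemma Lfun1_mul : (fun w => X w * Y w)%R \in Lfun P 1.
Proof.
apply: (Lfun1_dominated (measurable_funM mX mY) sqrD_Lfun1) => w.
exact: ler_normM_sqrD.
Qed.

Lemma abs_fine_expectation_mul_le :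
  (`|fine 'E_P[(fun w => X w * Y w)%R]| <=
   fine 'E_P[(fun w => X w ^+ 2)%R] + fine 'E_P[(fun w => Y w ^+ 2)%R])%R.
Proof.
rewrite -fine_expectationD ?Lfun1_sqr //.
by apply: abs_fine_expectation_le Lfun1_mul sqrD_Lfun1 _ => w; exact: ler_normM_sqrD.
Qed.

Let centered_productE m1 m2 : (fun w => (X w - m1) * (Y w - m2))%R =
  ((fun w => X w * Y w) \- m1 \o* Y \- m2 \o* X \+ cst (m1 * m2))%R.
Proof. by apply/funext => w /=; ring. Qed.

Lemma Lfun1_centered_product m1 m2 :
  (fun w => (X w - m1) * (Y w - m2))%R \in Lfun P 1.
Proof.
by rewrite centered_productE rpredD ?rpredB ?Lfun_scale ?Lfun_cst ?Lfun1_mul ?Lfun1_of_sqr.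
Qed.

Lemma expectation_centered_product m1 m2 :
  'E_P[(fun w => (X w - m1) * (Y w - m2))%R] =
  (cmom (fun _ => fine 'E_P[X]) (fun _ => fine 'E_P[Y])
        (fun _ => fine 'E_P[(fun w => X w * Y w)%R]) P m1 m2)%:E.
Proof.
have X1 := Lfun1_of_sqr mX X2; have Y1 := Lfun1_of_sqr mY Y2.
rewrite centered_productE expectationD ?expectationB ?expectationZl ?expectation_cst;
  rewrite ?rpredB ?Lfun_scale ?Lfun_cst ?Lfun1_mul //.
rewrite [in LHS](expectation_fineE X1) [in LHS](expectation_fineE Y1).
rewrite [in LHS](expectation_fineE Lfun1_mul) -!EFinM -!EFinB -!EFinD /cmom.
by congr EFin; ring.
Qed.

End expectation_moments.

(** * Reduction of the sublinear covariances to moment envelopes *)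

Section sublinear_moments.
Context d (T : measurableType d) (R : realType) (Pset : set (probability T R)).
Hypothesis Pset0 : Pset !=set0.
Local Open Scope ereal_scope.

Lemma expectation_le_Ehat p (Z : T -> R) : Pset p -> 'E_p[Z] <= Ehat Pset Z.
Proof. by move=> Pp; apply: ereal_sup_ubound; exists p. Qed.

Lemma Ehat_ge0 (Z : T -> R) : (forall w, 0 <= Z w)%R -> 0 <= Ehat Pset Z.
Proof.
move=> Z0; have [p Pp] := Pset0.
exact: le_trans (expectation_ge0 p Z0) (expectation_le_Ehat Z Pp).
Qed.

Lemma Ehat_EFin (Z : T -> R) (h : probability T R -> R) :
  (forall p, Pset p -> 'E_p[Z] = (h p)%:E) -> bounded_on Pset h ->
  Ehat Pset Z = (sup [set h p | p in Pset])%:E.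
Proof. by move=> Zh bh; rewrite /Ehat (eq_imagel Zh) ereal_sup_image_EFin. Qed.

Lemma Ehat_EFinN (Z : T -> R) (h : probability T R -> R) :
  (forall p, Pset p -> 'E_p[Z] = (h p)%:E) -> bounded_on Pset h ->
  (forall p, Pset p -> Z \in Lfun p 1) ->
  Ehat Pset (fun w => - Z w)%R = (- inf [set h p | p in Pset])%:E.
Proof.
move=> Zh bh Z1; rewrite /Ehat -ereal_sup_image_EFinN //; congr ereal_sup.
by apply: eq_imagel => p Pp; rewrite expectationN ?Z1 // Zh.
Qed.

Lemma fine_expectation_sqr_le_Ehat p (Z : T -> R) : Pset p ->
  Ehat Pset (fun w => Z w ^+ 2)%R < +oo ->
  (fine 'E_p[(fun w => Z w ^+ 2)%R] <= fine (Ehat Pset (fun w => Z w ^+ 2)%R))%R.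
Proof.
move=> Pp Z2; have Ep := expectation_le_Ehat (fun w => Z w ^+ 2)%R Pp.
have Z0 w : (0 <= Z w ^+ 2)%R by exact: sqr_ge0.
have Ep_fin : 'E_p[(fun w => Z w ^+ 2)%R] \is a fin_num.
  by rewrite ge0_fin_numE ?expectation_ge0 // (le_lt_trans Ep).
have Ehat_fin : Ehat Pset (fun w => Z w ^+ 2)%R \is a fin_num.
  by rewrite ge0_fin_numE ?Ehat_ge0.
exact: fine_le Ep_fin Ehat_fin Ep.
Qed.

Section square_integrable_family.
Variable W : T -> R.
Hypotheses (mW : measurable_fun setT W) (W2 : Ehat Pset (fun w => W w ^+ 2)%R < +oo).

Lemma expectation_sqr_lty p : Pset p -> 'E_p[(fun w => W w ^+ 2)%R] < +oo.
Proof. by move=> Pp; exact: le_lt_trans (expectation_le_Ehat _ Pp) W2. Qed.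

Lemma bounded_on_mean : bounded_on Pset (fun p => fine 'E_p[W]).
Proof.
exists (1 + fine (Ehat Pset (fun w => W w ^+ 2)))%R => p Pp.
rewrite (le_trans (abs_fine_expectation_le_1Dsqr mW (expectation_sqr_lty Pp))) //.
by rewrite lerD2l fine_expectation_sqr_le_Ehat.
Qed.

Lemma mu_up_mean : mu_up Pset W = sup [set fine 'E_p[W] | p in Pset].
Proof.
rewrite /mu_up (Ehat_EFin _ bounded_on_mean) // => p Pp.
by rewrite expectation_fineE // Lfun1_of_sqr ?expectation_sqr_lty.
Qed.

Lemma mu_lo_mean : mu_lo Pset W = inf [set fine 'E_p[W] | p in Pset].
Proof.
rewrite /mu_lo (Ehat_EFinN _ bounded_on_mean) /= ?opprK // => p Pp.
  by rewrite expectation_fineE // Lfun1_of_sqr ?expectation_sqr_lty.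
by rewrite Lfun1_of_sqr ?expectation_sqr_lty.
Qed.

End square_integrable_family.

Variables (X Y : T -> R).
Hypotheses (mX : measurable_fun setT X) (mY : measurable_fun setT Y).
Hypothesis XY2 :
  Ehat Pset (fun w => X w ^+ 2)%R + Ehat Pset (fun w => Y w ^+ 2)%R < +oo.

Local Notation x := (fun p : probability T R => fine 'E_p[X]).
Local Notation y := (fun p : probability T R => fine 'E_p[Y]).
Local Notation c := (fun p : probability T R => fine 'E_p[(fun w => X w * Y w)%R]).

Let X2 : Ehat Pset (fun w => X w ^+ 2)%R < +oo.
Proof. by apply: le_lt_trans XY2; rewrite leeDl // Ehat_ge0 // => w; exact: sqr_ge0. Qed.

Let Y2 : Ehat Pset (fun w => Y w ^+ 2)%R < +oo.
Proof. by apply: le_lt_trans XY2; rewrite leeDr // Ehat_ge0 // => w; exact: sqr_ge0. Qed.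

Lemma moments_bounded :
  [/\ bounded_on Pset x, bounded_on Pset y & bounded_on Pset c].
Proof.
split; [exact: bounded_on_mean mX X2 | exact: bounded_on_mean mY Y2 |].
exists (fine (Ehat Pset (fun w => X w ^+ 2)) + fine (Ehat Pset (fun w => Y w ^+ 2)))%R.
move=> p Pp; have X2p := expectation_sqr_lty X2 Pp; have Y2p := expectation_sqr_lty Y2 Pp.
rewrite (le_trans (abs_fine_expectation_mul_le mX mY X2p Y2p)) //.
by rewrite lerD ?fine_expectation_sqr_le_Ehat.
Qed.

Lemma mean_envelopes :
  [/\ mu_up Pset X = sup [set x p | p in Pset], mu_lo Pset X = inf [set x p | p in Pset],
      mu_up Pset Y = sup [set y p | p in Pset] & mu_lo Pset Y = inf [set y p | p in Pset]].
Proof. by rewrite !mu_up_mean ?mu_lo_mean. Qed.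

Lemma Ehat_centered_product m1 m2 :
  Ehat Pset (fun w => (X w - m1) * (Y w - m2))%R = (cmom_sup Pset x y c m1 m2)%:E.
Proof.
have [x_bnd y_bnd c_bnd] := moments_bounded.
apply: Ehat_EFin (cmom_bounded x_bnd y_bnd c_bnd m1 m2) => p Pp.
by rewrite expectation_centered_product ?expectation_sqr_lty.
Qed.

Lemma Ehat_neg_centered_product m1 m2 :
  Ehat Pset (fun w => - ((X w - m1) * (Y w - m2)))%R =
  (- cmom_inf Pset x y c m1 m2)%:E.
Proof.
have [x_bnd y_bnd c_bnd] := moments_bounded.
apply: Ehat_EFinN (cmom_bounded x_bnd y_bnd c_bnd m1 m2) _ => p Pp.
  by rewrite expectation_centered_product ?expectation_sqr_lty.
by rewrite Lfun1_centered_product ?expectation_sqr_lty.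
Qed.

Lemma Ehat_product : Ehat Pset (fun w => X w * Y w)%R = (cmom_sup Pset x y c 0 0)%:E.
Proof.
by rewrite -Ehat_centered_product; congr Ehat; apply/funext => w; rewrite !subr0.
Qed.

Lemma Ehat_neg_product :
  Ehat Pset (fun w => - (X w * Y w))%R = (- cmom_inf Pset x y c 0 0)%:E.
Proof.
by rewrite -Ehat_neg_centered_product; congr Ehat; apply/funext => w; rewrite !subr0.
Qed.

Lemma ucov_moments : ucov Pset X Y = ucov_env Pset x y c.
Proof.
rewrite /ucov /ucov_env /Mint; have [-> -> -> ->] := mean_envelopes.
congr ereal_sup; apply: eq_imagel => m2 _; congr ereal_inf.
by apply: eq_imagel => m1 _; exact: Ehat_centered_product.
Qed.

Lemma lcov_moments : lcov Pset X Y = lcov_env Pset x y c.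
Proof.
rewrite /lcov /lcov_env /Mint; have [-> -> -> ->] := mean_envelopes.
congr ereal_inf; apply: eq_imagel => m2 _; congr ereal_sup.
by apply: eq_imagel => m1 _; rewrite Ehat_neg_centered_product EFinN oppeK.
Qed.

End sublinear_moments.

Theorem proposition3p16 (d : measure_display) (T : measurableType d)
  (R : realType) (Pset : set (probability T R)) (X Y : T -> R) :
  Pset !=set0 ->
  measurable_fun setT X -> measurable_fun setT Y ->
  (Ehat Pset (fun w => X w ^+ 2)%R + Ehat Pset (fun w => Y w ^+ 2)%R < +oo)%E ->
  let muXu := mu_up Pset X in let muXl := mu_lo Pset X in
  let muYu := mu_up Pset Y in let muYl := mu_lo Pset Y in
  let rhoX := (muXu + muXl) / 2 in let rhoY := (muYu + muYl) / 2 in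
  let DX := muXu - muXl in let DY := muYu - muYl in
  let Cu := ucov Pset X Y in let Cl := lcov Pset X Y in
  let EU := fun m1 m2 => Ehat Pset (fun w => (X w - m1) * (Y w - m2)) in
  let EL := fun m1 m2 =>
    (- Ehat Pset (fun w => - ((X w - m1) * (Y w - m2)))%R)%E in
  let Mu := Num.max (Num.max (muXl * muYl) (muXu * muYl))
                    (Num.max (muXl * muYu) (muXu * muYu)) in
  let Ml := Num.min (Num.min (muXl * muYl) (muXu * muYl))
                    (Num.min (muXl * muYu) (muXu * muYu)) in
  (* (1) *)
  ((forall m1 m2, (m1, m2) = (muXu, muYu) \/ (m1, m2) = (muXl, muYl) ->
      (Cu <= EU m1 m2 <= Cu + (DX * DY)%:E)%E /\
      (Cl <= EL m1 m2 <= Cl + (DX * DY)%:E)%E) /\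
   (forall m1 m2, (m1, m2) = (muXl, muYu) \/ (m1, m2) = (muXu, muYl) ->
      (Cu - (DX * DY)%:E <= EU m1 m2 <= Cu + (DX * DY)%:E)%E /\
      (Cl - (DX * DY)%:E <= EL m1 m2 <= Cl + (DX * DY)%:E)%E)) /\
  (* (2) *)
  ((Cu + Ml%:E <= Ehat Pset (fun w => X w * Y w)%R <= Cu + Mu%:E)%E /\
   (Cl + Ml%:E <= - Ehat Pset (fun w => - (X w * Y w))%R <= Cl + Mu%:E)%E) /\
  (* (3) *)
  ((EU rhoX rhoY - (DX * DY / 4)%:E <= Cu <= EU rhoX rhoY + (DX * DY / 4)%:E)%E /\
   (EL rhoX rhoY - (DX * DY / 4)%:E <= Cl <= EL rhoX rhoY + (DX * DY / 4)%:E)%E) /\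
  (* (4) *)
  (0 <= Cu - Cl <=
     EU rhoX rhoY + Ehat Pset (fun w => - ((X w - rhoX) * (Y w - rhoY)))%R
     + (DX * DY / 2)%:E)%E.
Proof.
move=> Pset0 mX mY XY2 muXu muXl muYu muYl rhoX rhoY DX DY Cu Cl EU EL Mu Ml.
pose x p := fine 'E_p[X]; pose y p := fine 'E_p[Y].
pose c p := fine 'E_p[(fun w => X w * Y w)%R].
have [x_bnd y_bnd c_bnd] := moments_bounded Pset0 mX mY XY2.
have EUE : EU = fun m1 m2 => (cmom_sup Pset x y c m1 m2)%:E.
  by apply/funext => m1; apply/funext => m2; exact: Ehat_centered_product.
have ELE : EL = fun m1 m2 => (cmom_inf Pset x y c m1 m2)%:E.
  apply/funext => m1; apply/funext => m2.
  by rewrite /EL Ehat_neg_centered_product // EFinN oppeK.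
have [muXuE muXlE muYuE muYlE] := mean_envelopes Pset0 mX mY XY2.
rewrite /Cu /Cl ucov_moments // lcov_moments // EUE ELE Ehat_product //.
rewrite Ehat_neg_product // EFinN oppeK Ehat_neg_centered_product //.
rewrite /DX /DY /rhoX /rhoY /Mu /Ml /muXu /muXl /muYu /muYl muXuE muXlE muYuE muYlE.
split; [split|split; [split|split]].
- by move=> m1 m2; apply: cov_env_concordant.
- move=> m1 m2 [] [-> ->]; apply: cov_env_box => //;
    by apply/andP; split => //; apply: inf_le_sup_image.
- by apply: ucov_env_product.
- by apply: lcov_env_product.
- by apply: cov_env_midpoint.
- by apply: cov_env_gap.
Qed.
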